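(* For every $n$ with $2\le n\le\infty$, the identity $ytxsyx \approx ytxsxy$ is a finite identity basis for the $\sharp$-sylvester monoid $\mathrm{sylv}^\sharp_n$. Consequently, all $\sharp$-sylvester monoids of rank at least $2$ (including rank $\infty$) are equationally equivalent.
   Context: Let $\mathcal{A}=\{1<2<3<\cdots\}$, $\mathcal{A}_n=\{1<\cdots<n\}$, $\mathcal{A}_\infty=\mathcal{A}$. A left strict binary search tree is a labelled rooted binary tree (labels in $\mathcal{A}$) in which each node's label is $>$ every label in its left subtree and $\le$ every label in its right subtree. Inserting $a$ into such a tree $T$: if $T$ is empty, create a node labelled $a$; otherwise, with root label $x$, recursively insert $a$ into the left subtree if $a<x$ and into the right subtree otherwise. For $w=w_1\cdots w_k\in\mathcal{A}^*$, $\mathrm{P}^\sharp(w)$ is obtained from the empty tree by inserting $w_1,w_2,\dots,w_k$ in this order (reading left to right). The relation $u\equiv v\iff\mathrm{P}^\sharp(u)=\mathrm{P}^\sharp(v)$ is a congruence, and $\mathrm{sylv}^\sharp_n=\mathcal{A}_n^*/{\equiv}$. Identities: $\mathcal{X}$ is a countably infinite alphabet; an identity is $\mathbf{u}\approx\mathbf{v}$ with $\mathbf{u},\mathbf{v}\in\mathcal{X}^*$; a monoid $S$ satisfies it if $\varphi(\mathbf{u})=\varphi(\mathbf{v})$ for all maps $\varphi:\mathcal{X}\to S$ (extended to monoid homomorphisms). $\mathbf{u}\approx\mathbf{v}$ is derived from a set $\Sigma$ if there is a sequence $\mathbf{u}=\mathbf{u}_1,\dots,\mathbf{u}_m=\mathbf{v}$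 with $\mathbf{u}_i=\mathbf{a}\varphi(\mathbf{p})\mathbf{b}$, $\mathbf{u}_{i+1}=\mathbf{a}\varphi(\mathbf{q})\mathbf{b}$ for some words $\mathbf{a},\mathbf{b}\in\mathcal{X}^*$, a monoid endomorphism $\varphi$ of $\mathcal{X}^*$ (letters may go to the empty word), and $\mathbf{p}\approx\mathbf{q}\in\Sigma$. A finite identity basis for $S$ is a finite set $\Sigma$ of identities satisfied by $S$ from which every identity satisfied by $S$ is derived. Two monoids are equationally equivalent if they satisfy the same identities. *)

From Stdlib Require Import Relations.
From mathcomp Require Import all_boot.

Set Implicit Arguments.
Unset Strict Implicit.
Unset Printing Implicit Defensive.

(* A rank is [Some n] (alphabet A_n = {1 < ... < n}) or [None] (A_oo = {1 < 2 < ...}). *)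
Definition rank := option nat.

Definition rank_ge2 (n : rank) : bool :=
  if n is Some k then 2 <= k else true.

Definition in_alph (n : rank) (a : nat) : bool :=
  (0 < a) && (if n is Some k then a <= k else true).

Inductive tree : Type :=
  | Leaf : tree
  | Node : tree -> nat -> tree -> tree.

Fixpoint insert (a : nat) (t : tree) : tree :=
  match t with
  | Leaf => Node Leaf a Leaf
  | Node l x r => if a < x then Node (insert a l) x r else Node l x (insert a r)
  end.

Definition Psharp (w : seq nat) : tree := foldl (fun t a => insert a t) Leaf w.

Definition identity := (seq nat * seq nat)%type.

Definition subst (phi : nat -> seq nat) (w : seq nat) : seq nat := flatten (map phi w).

(* sylv#_n = A_n^* / ≡ satisfies u ≈ v: every map X -> sylv#_n lifts to a map
   X -> A_n^* (choose representatives), and since ≡ is a congruence the value of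
   a word is the class of the substituted word. *)
Definition sylv_satisfies (n : rank) (u v : seq nat) : Prop :=
  forall psi : nat -> seq nat,
    (forall x, all (in_alph n) (psi x)) ->
    Psharp (subst psi u) = Psharp (subst psi v).

Definition deriv_step (Sigma : seq identity) (w1 w2 : seq nat) : Prop :=
  exists (a b : seq nat) (phi : nat -> seq nat) (p q : seq nat),
    ((p, q) \in Sigma \/ (q, p) \in Sigma) /\
    w1 = a ++ subst phi p ++ b /\ w2 = a ++ subst phi q ++ b.

Definition derivable (Sigma : seq identity) : relation (seq nat) :=
  clos_refl_trans (seq nat) (deriv_step Sigma).

Definition sylv_finite_basis (n : rank) (Sigma : seq identity) : Prop :=
  (forall p q, (p, q) \in Sigma -> sylv_satisfies n p q) /\
  (forall u v, sylv_satisfies n u v -> derivable Sigma u v).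

(* Variables: x = 0, y = 1, t = 2, s = 3. *)
Definition ytxsyx : seq nat := [:: 1; 2; 0; 3; 1; 0].
Definition ytxsxy : seq nat := [:: 1; 2; 0; 3; 0; 1].

(** Once a tree contains two distinct letters a < b, some node separates them,
    so later copies of a and b are inserted into different subtrees and commute:
    this is why ytxsyx = ytxsxy holds (y and x already occur in the prefix ytxs).
    Conversely, evaluating x to 1, y to 2 and every other variable to the empty
    word, the number of 1-nodes at the top of the right spine of the tree is the
    number of x's before the first y.  So an identity of sylv#_n (n >= 2) preserves
    the content of a word and these counts.  Two words agreeing on them are
    derivable from each other: reading them left to right, the basis identity
    commutes adjacent letters that have both occurred before, which suffices to
    align them. *)

From mathcomp Require Import all_boot.
From Stdlib Require Import Relations.

Set Implicit Arguments.
Unset Strict Implicit.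
Unset Printing Implicit Defensive.

Definition insert_all (t : tree) (w : seq nat) : tree :=
  foldl (fun t a => insert a t) t w.

Lemma insert_all_cons t a w : insert_all t (a :: w) = insert_all (insert a t) w.
Proof. by []. Qed.

Lemma insert_all_cat t u v : insert_all t (u ++ v) = insert_all (insert_all t u) v.
Proof. exact: foldl_cat. Qed.

Lemma insert_all_node l x r w :
  insert_all (Node l x r) w =
  Node (insert_all l [seq a <- w | a < x]) x (insert_all r [seq a <- w | x <= a]).
Proof.
elim: w l r => [|a w IHw] l r //.
by rewrite insert_all_cons /=; case: ltnP => _; rewrite IHw.
Qed.

Lemma Psharp_cons c w :
  Psharp (c :: w) = Node (Psharp [seq a <- w | a < c]) c (Psharp [seq a <- w | c <= a]).
Proof. exact: insert_all_node. Qed.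

Fixpoint keep_lt (x : nat) (t : tree) : tree :=
  match t with
  | Leaf => Leaf
  | Node l c r => if c < x then Node l c (keep_lt x r) else keep_lt x l
  end.

Fixpoint keep_ge (x : nat) (t : tree) : tree :=
  match t with
  | Leaf => Leaf
  | Node l c r => if x <= c then Node (keep_ge x l) c r else keep_ge x r
  end.

Lemma keep_lt_insert x a t :
  keep_lt x (insert a t) = if a < x then insert a (keep_lt x t) else keep_lt x t.
Proof.
elim: t => [|l IHl c r IHr] /=; first by case: ifP.
case: (ltnP a c) => [ac|ca] /=; case: (ltnP c x) => [cx|xc] //=.
- by rewrite (ltn_trans ac cx) ac.
- by rewrite IHr; case: ifP; rewrite // (ltnNge a c) ca.
- by rewrite ltnNge (leq_trans xc ca).
Qed.

Lemma keep_ge_insert x a t :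
  keep_ge x (insert a t) = if x <= a then insert a (keep_ge x t) else keep_ge x t.
Proof.
elim: t => [|l IHl c r IHr] /=; first by case: ifP.
case: (ltnP a c) => [ac|ca] /=; case: (leqP x c) => [xc|cx] //=.
- by rewrite IHl; case: ifP; rewrite //= ac.
- by rewrite leqNgt (ltn_trans ac cx).
- by rewrite (leq_trans xc ca) (ltnNge a c) ca.
Qed.

Lemma keep_lt_insert_all x t w :
  keep_lt x (insert_all t w) = insert_all (keep_lt x t) [seq a <- w | a < x].
Proof.
elim: w t => [|a w IHw] t //.
by rewrite insert_all_cons IHw keep_lt_insert /=; case: ifP.
Qed.

Lemma keep_ge_insert_all x t w :
  keep_ge x (insert_all t w) = insert_all (keep_ge x t) [seq a <- w | x <= a].
Proof.
elim: w t => [|a w IHw] t //.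
by rewrite insert_all_cons IHw keep_ge_insert /=; case: ifP.
Qed.

Lemma Psharp_filter_lt x w : Psharp [seq a <- w | a < x] = keep_lt x (Psharp w).
Proof. exact: esym (keep_lt_insert_all x Leaf w). Qed.

Lemma Psharp_filter_ge x w : Psharp [seq a <- w | x <= a] = keep_ge x (Psharp w).
Proof. exact: esym (keep_ge_insert_all x Leaf w). Qed.

Lemma insert_all_Psharp_eq t u v :
  Psharp u = Psharp v -> insert_all t u = insert_all t v.
Proof.
elim: t u v => [|l IHl x r IHr] u v Euv //.
rewrite !insert_all_node (IHl _ [seq a <- v | a < x]) ?(IHr _ [seq a <- v | x <= a]) //.
  by rewrite !Psharp_filter_ge Euv.
by rewrite !Psharp_filter_lt Euv.
Qed.

Lemma Psharp_congr a b u v :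
  Psharp u = Psharp v -> Psharp (a ++ u ++ b) = Psharp (a ++ v ++ b).
Proof.
move=> Euv; rewrite /Psharp -!/(insert_all _ _) !insert_all_cat.
by rewrite (insert_all_Psharp_eq _ Euv).
Qed.

Fixpoint separates (t : tree) (a b : nat) : bool :=
  match t with
  | Leaf => false
  | Node l x r =>
      if (a < x) && (b < x) then separates l a b
      else if (x <= a) && (x <= b) then separates r a b
      else true
  end.

Lemma separatesC t a b : separates t a b = separates t b a.
Proof. by elim: t => //= l -> x r ->; rewrite andbC [(x <= b) && _]andbC. Qed.

Lemma catC_all_eq (A B : seq nat) :
  (forall a b, a \in A -> b \in B -> a = b) -> A ++ B = B ++ A.
Proof.
case: A => [|a A]; first by rewrite cats0.
case: B => [|b B] eqAB; first by rewrite cats0.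
have eqA c : c \in a :: A -> c = b by move/eqAB; apply; exact: mem_head.
have eqB c : c \in b :: B -> c = b.
  by move=> /(eqAB a c (mem_head a A)) <-; apply: eqA; exact: mem_head.
have /all_pred1P -> : all (pred1 b) (a :: A) by apply/allP => c /eqA /= ->.
have /all_pred1P -> : all (pred1 b) (b :: B) by apply/allP => c /eqB /= ->.
by rewrite -!nseqD addnC.
Qed.

Lemma insert_all_catC t A B :
  (forall a b, a \in A -> b \in B -> a = b \/ separates t a b) ->
  insert_all t (A ++ B) = insert_all t (B ++ A).
Proof.
elim: t A B => [|l IHl x r IHr] A B sepAB.
  by rewrite (@catC_all_eq A B) // => a b aA bB; case: (sepAB a b aA bB).
rewrite !insert_all_node !filter_cat.
rewrite (IHl _ [seq a <- B | a < x]) ?(IHr _ [seq a <- B | x <= a]) //.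
  move=> a b; rewrite !mem_filter => /andP[xa aA] /andP[xb bB].
  by case: (sepAB a b aA bB) => [->|/=]; [left|rewrite ltnNge xa ltnNge xb /=; right].
move=> a b; rewrite !mem_filter => /andP[ax aA] /andP[bx bB].
by case: (sepAB a b aA bB) => [->|/=]; [left|rewrite ax bx /=; right].
Qed.

Fixpoint bst_mem (t : tree) (d : nat) : bool :=
  match t with
  | Leaf => false
  | Node l x r => (x == d) || (if d < x then bst_mem l d else bst_mem r d)
  end.

Lemma bst_mem_insert t a d : bst_mem t d || (a == d) -> bst_mem (insert a t) d.
Proof.
elim: t => [|l IHl x r IHr] /=; first by move=> ->.
case: (ltnP a x) => ax /=; case: eqP => //= _; case: (ltnP d x) => dx memd.
- exact: IHl.
- by case/orP: memd => // /eqP ad; rewrite -ad leqNgt ax in dx.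
- by case/orP: memd => // /eqP ad; rewrite ad leqNgt dx in ax.
- exact: IHr.
Qed.

Lemma bst_mem_insert_all t w d : bst_mem t d || (d \in w) -> bst_mem (insert_all t w) d.
Proof.
elim: w t => [|a w IHw] t; first by rewrite orbF.
rewrite insert_all_cons in_cons => memd; apply: IHw.
case/orP: memd => [td|/orP[/eqP ->|->]]; rewrite ?orbT //.
  by rewrite bst_mem_insert ?td.
by rewrite bst_mem_insert ?eqxx ?orbT.
Qed.

Lemma bst_mem_separates t c d : bst_mem t d -> c < d -> separates t c d.
Proof.
elim: t => [|l IHl x r IHr] //= memd cd.
case: (x =P d) memd => [-> _|_ /= memd].
  by rewrite ltnn andbF /= leqNgt cd.
case: (ltnP d x) memd => dx memd; first by rewrite (ltn_trans cd dx) /= IHl.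
by rewrite andbF andbT; case: leqP => // _; apply: IHr.
Qed.

Lemma Psharp_separates p a b : a \in p -> b \in p -> a = b \/ separates (Psharp p) a b.
Proof.
move=> ap bp; case: (ltngtP a b) => [ab|ba|->]; [right|right|by left].
  by apply: bst_mem_separates ab; apply: bst_mem_insert_all; rewrite bp orbT.
by rewrite separatesC; apply: bst_mem_separates ba; apply: bst_mem_insert_all; rewrite ap orbT.
Qed.

Lemma Psharp_ytxsyx Y T X S :
  Psharp (Y ++ T ++ X ++ S ++ Y ++ X) = Psharp (Y ++ T ++ X ++ S ++ X ++ Y).
Proof.
have catp Z : Y ++ T ++ X ++ S ++ Z = (Y ++ T ++ X ++ S) ++ Z by rewrite !catA.
rewrite !catp /Psharp -!/(insert_all _ _) !(insert_all_cat _ (Y ++ _)).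
apply: insert_all_catC => a b aY bX.
by apply: Psharp_separates; rewrite !mem_cat ?aY ?bX ?orbT.
Qed.

Notation sylv_basis := [:: (ytxsyx, ytxsxy)].

Lemma subst_cat phi u v : subst phi (u ++ v) = subst phi u ++ subst phi v.
Proof. by rewrite /subst map_cat flatten_cat. Qed.

Lemma subst_cons phi a w : subst phi (a :: w) = phi a ++ subst phi w.
Proof. by []. Qed.

Lemma all_subst (P : pred nat) phi w : (forall z, all P (phi z)) -> all P (subst phi w).
Proof. by move=> allP_phi; elim: w => //= z w IHw; rewrite subst_cons all_cat allP_phi. Qed.

Lemma subst_comp psi phi w : subst psi (subst phi w) = subst (subst psi \o phi) w.
Proof. by elim: w => //= a w IHw; rewrite !subst_cons subst_cat IHw. Qed.

Lemma subst_ytxsyx chi : subst chi ytxsyx = chi 1 ++ chi 2 ++ chi 0 ++ chi 3 ++ chi 1 ++ chi 0.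
Proof. by rewrite /subst /= cats0. Qed.

Lemma subst_ytxsxy chi : subst chi ytxsxy = chi 1 ++ chi 2 ++ chi 0 ++ chi 3 ++ chi 0 ++ chi 1.
Proof. by rewrite /subst /= cats0. Qed.

Lemma Psharp_subst_basis chi : Psharp (subst chi ytxsyx) = Psharp (subst chi ytxsxy).
Proof. by rewrite subst_ytxsyx subst_ytxsxy Psharp_ytxsyx. Qed.

Lemma Psharp_subst_deriv_step psi w1 w2 :
  deriv_step sylv_basis w1 w2 -> Psharp (subst psi w1) = Psharp (subst psi w2).
Proof.
case=> a [b [phi [p [q [basis_pq [-> ->]]]]]].
rewrite !subst_cat !subst_comp; apply: Psharp_congr.
by rewrite !inE in basis_pq; case: basis_pq => /eqP[-> ->]; rewrite Psharp_subst_basis.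
Qed.

Lemma derivable_sylv_satisfies n u v : derivable sylv_basis u v -> sylv_satisfies n u v.
Proof.
move=> der psi _; elim: der => [w1 w2|w|w1 w2 w3 _ -> _ ->] //.
exact: Psharp_subst_deriv_step.
Qed.

Lemma deriv_step_sym Sigma w1 w2 : deriv_step Sigma w1 w2 -> deriv_step Sigma w2 w1.
Proof.
case=> a [b [phi [p [q [Sigma_pq [-> ->]]]]]].
by exists a, b, phi, q, p; split; [tauto|].
Qed.

Lemma derivable_sym Sigma u v : derivable Sigma u v -> derivable Sigma v u.
Proof.
elim=> [w1 w2 /deriv_step_sym|w|w1 w2 w3 _ d12 _ d23].
- exact: rt_step.
- exact: rt_refl.
- exact: rt_trans d23 d12.
Qed.

Lemma derivable_swap_after p1 p2 p3 c d b :
  derivable sylv_basis (p1 ++ c :: p2 ++ d :: p3 ++ c :: d :: b)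
                       (p1 ++ c :: p2 ++ d :: p3 ++ d :: c :: b).
Proof.
pose phi z := if z == 0 then [:: d] else if z == 1 then [:: c]
              else if z == 2 then p2 else p3.
apply: rt_step; exists p1, b, phi, ytxsyx, ytxsxy; split; first by left; rewrite inE.
by rewrite subst_ytxsyx subst_ytxsxy /phi /= -!catA /= -!catA.
Qed.

Lemma derivable_swap p x y b : x \in p -> y \in p ->
  derivable sylv_basis (p ++ x :: y :: b) (p ++ y :: x :: b).
Proof.
have [-> _ _|neq_xy xp yp] := eqVneq x y; first exact: rt_refl.
have [p1 [p2 [p3 [c [d [-> cd]]]]]] : exists p1 p2 p3 c d,
    p = p1 ++ c :: p2 ++ d :: p3 /\ ((c, d) = (x, y) \/ (c, d) = (y, x)).
  case/splitPr: xp yp => q1 q2; rewrite mem_cat in_cons.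
  case/or3P => [/splitPr[r1 r2]|/eqP yx|/splitPr[r1 r2]].
  - by exists r1, r2, q2, y, x; rewrite -catA; split; [|right].
  - by rewrite yx eqxx in neq_xy.
  - by exists q1, r1, r2, x, y; split; [|left].
rewrite -!catA /= -!catA /=.
case: cd => [[<- <-]|[<- <-]]; first exact: derivable_swap_after.
by apply: derivable_sym; apply: derivable_swap_after.
Qed.

Lemma derivable_bubble p v a w : a \in p -> {subset v <= p} ->
  derivable sylv_basis (p ++ v ++ a :: w) (p ++ a :: v ++ w).
Proof.
elim: v p => [|c v IHv] p ap vp /=; first exact: rt_refl.
have cp : c \in p by apply: vp; exact: mem_head.
apply: rt_trans (_ : derivable _ (p ++ c :: a :: v ++ w) _); last exact: derivable_swap.
have := IHv (rcons p c); rewrite !cat_rcons; apply.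
  by rewrite mem_rcons in_cons ap orbT.
by move=> z zv; rewrite mem_rcons in_cons vp ?orbT // in_cons zv orbT.
Qed.

Definition count_before (x y : nat) (w : seq nat) : nat :=
  count_mem x (take (index y w) w).

Lemma count_before_cat x y u v :
  y \notin u -> count_before x y (u ++ v) = count_mem x u + count_before x y v.
Proof.
move=> yu; rewrite /count_before index_cat (negbTE yu) take_cat ltnNge leq_addr /=.
by rewrite addKn count_cat.
Qed.

Lemma count_before_cons x y a w :
  a != y -> count_before x y (a :: w) = (a == x) + count_before x y w.
Proof. by move=> ay; rewrite -cat1s count_before_cat /= ?addn0 // inE eq_sym. Qed.

(* [p] is the prefix already read: letters occurring in it may be moved freely,
   so only counts before first occurrences of the other letters are constrained. *)
Definition agree_after (p u v : seq nat) : Prop :=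
  perm_eq u v /\
  forall x y, x != y -> y \notin p -> count_before x y u = count_before x y v.

Lemma agree_after_cons p a u v :
  agree_after p (a :: u) (a :: v) -> agree_after (rcons p a) u v.
Proof.
case; rewrite perm_cons => perm_uv cb; split=> // x y xy.
rewrite mem_rcons in_cons negb_or eq_sym => /andP[ay yp].
by apply/eqP; rewrite -(eqn_add2l (a == x)) -!count_before_cons // cb.
Qed.

Lemma agree_after_head p a b u v :
  agree_after p (a :: u) (b :: v) -> a \notin p -> a = b.
Proof.
case=> _ cb ap; apply/eqP/negPn/negP => ab.
have ba : b != a by rewrite eq_sym.
by have := cb b a ba ap; rewrite /count_before /= eqxx (negbTE ba) /= eqxx.
Qed.

Lemma agree_after_extract p a u v : a \in p -> agree_after p (a :: u) v ->
  exists v1 v2, [/\ v = v1 ++ a :: v2, {subset v1 <= p}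
                  & agree_after (rcons p a) u (v1 ++ v2)].
Proof.
move=> ap [perm_uv cb].
have av : a \in v by rewrite -(perm_mem perm_uv) mem_head.
set v1 := take (index a v) v; set v2 := drop (index a v).+1 v.
have v_split : v = v1 ++ a :: v2 by rewrite -drop_index ?cat_take_drop.
have av1 : a \notin v1 by rewrite in_take // ltnn.
have v1p : {subset v1 <= p}.
  move=> y yv1; apply/negPn/negP => yp.
  have ay : a != y by apply: contraNneq av1 => ->.
  have := cb a y ay yp; rewrite count_before_cons // eqxx.
  rewrite v_split /count_before index_cat yv1 take_cat index_mem yv1.
  have /count_memPn -> // : a \notin take (index y v1) v1.
  by apply: contra av1; apply: mem_take.
exists v1, v2; split=> //; apply: agree_after_cons; split.
  by apply: perm_trans perm_uv _; rewrite v_split -cat1s perm_catCA.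
move=> x y xy yp; have ay : a != y by apply: contraNneq yp => <-.
have yv1 : y \notin v1 by apply: contra yp; apply: v1p.
rewrite cb // v_split count_before_cons // !(count_before_cat x _ yv1).
by rewrite count_before_cons // addnCA.
Qed.

Lemma derivable_agree_after p u v :
  agree_after p u v -> derivable sylv_basis (p ++ u) (p ++ v).
Proof.
elim: u p v => [|a u IHu] p v agree_uv.
  by case: agree_uv => /perm_size/esym/size0nil -> _; exact: rt_refl.
have [ap|anp] := boolP (a \in p).
  have [v1 [v2 [-> v1p agree_u]]] := agree_after_extract ap agree_uv.
  apply: rt_trans (_ : derivable _ (p ++ a :: v1 ++ v2) _).
    by have := IHu (rcons p a) _ agree_u; rewrite !cat_rcons.
  exact/derivable_sym/derivable_bubble.
case: v agree_uv => [[/perm_size]//|b v agree_uv].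
have eq_ab := agree_after_head agree_uv anp; subst b.
by have := IHu (rcons p a) _ (agree_after_cons agree_uv); rewrite !cat_rcons.
Qed.

Fixpoint right_ones (t : tree) : nat :=
  if t is Node _ c r then if c == 1 then (right_ones r).+1 else 0 else 0.

Lemma right_ones_Psharp w :
  all (fun c => (c == 1) || (c == 2)) w -> right_ones (Psharp w) = index 2 w.
Proof.
elim: w => //= c w IHw /andP[/orP[]/eqP-> w12]; rewrite Psharp_cons //=.
congr S; rewrite -IHw //; congr (right_ones (Psharp _)).
by apply/all_filterP; apply: sub_all w12 => a /orP[]/eqP->.
Qed.

Definition mark (x y z : nat) : seq nat :=
  if z == x then [:: 1] else if z == y then [:: 2] else [::].

Lemma mark12 x y z : all (fun c => (c == 1) || (c == 2)) (mark x y z).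
Proof. by rewrite /mark; case: ifP => //; case: ifP. Qed.

Lemma index_mark x y w : x != y -> index 2 (subst (mark x y) w) = count_before x y w.
Proof.
move=> xy; elim: w => //= z w IHw; rewrite subst_cons.
have [->|zy] := eqVneq z y.
  by rewrite /mark eq_sym (negbTE xy) eqxx /count_before /= eqxx.
rewrite count_before_cons // [mark _ _ z]/mark.
by case: eqP => _ /=; rewrite ?(negbTE zy) IHw.
Qed.

Lemma index_mark_self x w : index 2 (subst (mark x x) w) = count_mem x w.
Proof.
elim: w => //= z w IHw; rewrite subst_cons [mark _ _ z]/mark.
by case: eqP => _; rewrite /= IHw.
Qed.

Lemma in_alph_1_2 n : rank_ge2 n -> in_alph n 1 && in_alph n 2.
Proof. by case: n => [k|] //= k2; rewrite /in_alph /= k2 (ltnW k2). Qed.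

Lemma in_alph_mark n x y z : rank_ge2 n -> all (in_alph n) (mark x y z).
Proof.
move=> /in_alph_1_2 /andP[in1 in2].
by rewrite /mark; case: ifP => _ /=; rewrite ?in1 //; case: ifP => _ /=; rewrite ?in2.
Qed.

Lemma sylv_satisfies_index_mark n u v x y : rank_ge2 n -> sylv_satisfies n u v ->
  index 2 (subst (mark x y) u) = index 2 (subst (mark x y) v).
Proof.
move=> n2 sat; have mark12_subst w := all_subst w (mark12 x y).
by rewrite -!right_ones_Psharp // sat // => z; exact: in_alph_mark.
Qed.

Lemma sylv_satisfies_agree n u v :
  rank_ge2 n -> sylv_satisfies n u v -> agree_after [::] u v.
Proof.
move=> n2 sat; have index_eq x y := sylv_satisfies_index_mark x y n2 sat.
split=> [|x y xy _]; last by rewrite -!index_mark.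
by apply/allP => x _; rewrite /= -!index_mark_self index_eq.
Qed.

Lemma sylv_satisfies_derivable n u v :
  rank_ge2 n -> sylv_satisfies n u v -> derivable sylv_basis u v.
Proof. by move=> n2 /(sylv_satisfies_agree n2) /derivable_agree_after. Qed.

Theorem theorem4p7 :
  (forall n : rank, rank_ge2 n -> sylv_finite_basis n [:: (ytxsyx, ytxsxy)]) /\
  (forall n m : rank, rank_ge2 n -> rank_ge2 m ->
     forall u v : seq nat, sylv_satisfies n u v <-> sylv_satisfies m u v).
Proof.
split=> [n n2|n m n2 m2 u v].
  split=> [p q|u v]; last exact: sylv_satisfies_derivable.
  by rewrite inE => /eqP[-> ->] psi _; exact: Psharp_subst_basis.
split=> sat; apply: derivable_sylv_satisfies.
  exact: sylv_satisfies_derivable n2 sat.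
exact: sylv_satisfies_derivable m2 sat.
Qed.
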